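(* Let $X$ be a real Hilbert space, $W$ a real Banach space, $A\subset W$ closed, $r>0$, $T>0$, and let $\{Z(w);w\in A\}$ be a family of $r$-prox-regular subsets of $X$ satisfying: for every $\varepsilon>0$ there is $\delta>0$ such that $|w-\hat w|_W<\delta$ implies $d_H(Z(w),Z(\hat w))<\varepsilon$. Let $y\in G_R(0,T;X)$ and $w\in G_R(0,T;W)$ be such that $w(t)\in A$ and $\mathrm{dist}(y(t),Z(w(t)))\le r/2$ for every $t\in[0,T]$. Let $\zeta:[0,T]\to X$ be defined so that $\zeta(t)$ is the only vector in $Z(w(t))$ such that $$\langle y(t)-\zeta(t),\zeta(t)-z\rangle+\frac{|y(t)-\zeta(t)|}{2r}|\zeta(t)-z|^2\ge0\quad\forall z\in Z(w(t)).$$ Then $\zeta\in G_R(0,T;X)$.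
   Context: $X$ is a real Hilbert space with scalar product $\langle\cdot,\cdot\rangle$ and norm $|\cdot|$; $W$ a real Banach space with norm $|\cdot|_W$; $\mathrm{dist}(x,Z)=\inf_{z\in Z}|x-z|$; $d_H(Z,\hat Z)=\max\{\sup_{z\in Z}\mathrm{dist}(z,\hat Z),\sup_{\hat z\in\hat Z}\mathrm{dist}(\hat z,Z)\}$. A closed connected $Z\subset X$ is $r$-prox-regular if for every $y\in X$ with $\mathrm{dist}(y,Z)=d\in(0,r)$ there is $x\in Z$ with $\mathrm{dist}(x+\frac rd(y-x),Z)=\frac rd|y-x|=r$. For a Banach space $E$, $G_R(0,T;E)$ is the space of right-continuous regulated functions $f:[0,T]\to E$, i.e. functions with one-sided limits $f(t-)$, $f(t+)$ at every point and $f(t+)=f(t)$. *)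

From HB Require Import structures.
From mathcomp Require Import all_boot all_order all_algebra.
From mathcomp Require Import all_classical all_reals all_analysis.
Set Implicit Arguments. Unset Strict Implicit. Unset Printing Implicit Defensive.
Import Order.TTheory GRing.Theory Num.Theory.
Import numFieldNormedType.Exports.
Local Open Scope classical_set_scope.
Local Open Scope ring_scope.

(* A real inner product compatible with the norm of X: together with
   completeness of X (completeNormedModType) this makes X a real Hilbert space,
   <x,y> = ip x y and |x| = `|x|. *)
Definition inner_product (R : realType) (X : normedModType R) (ip : X -> X -> R) :=
  [/\ (forall x y, ip x y = ip y x),
      (forall a x y z, ip (a *: x + y) z = a * ip x z + ip y z) &
      (forall x, ip x x = `|x| ^+ 2)].

Definition dist (R : realType) (X : normedModType R) (x : X) (Z : set X) : R :=
  inf [set `|x - z| | z in Z].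

Definition dH (R : realType) (X : normedModType R) (Z Zh : set X) : \bar R :=
  maxe (ereal_sup [set (dist z Zh)%:E | z in Z])
       (ereal_sup [set (dist zh Z)%:E | zh in Zh]).

Definition prox_regular (R : realType) (X : normedModType R) (r : R) (Z : set X) :=
  [/\ closed Z, connected Z &
   forall y : X, 0 < dist y Z < r ->
     exists2 x, Z x &
       dist (x + (r / dist y Z) *: (y - x)) Z = r /\
       (r / dist y Z) * `|y - x| = r].

(* G_R(0,T;E): right-continuous regulated functions on [0,T]
   (a function R -> E of which only the values on [0,T] matter). *)
Definition regulated_rc (R : realType) (E : normedModType R) (T : R) (f : R -> E) :=
  (forall t, 0 < t <= T -> cvg (f @ t^'-)) /\
  (forall t, 0 <= t < T -> f @ t^'+ --> f t).

From HB Require Import structures.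
From mathcomp Require Import all_boot all_order all_algebra.
From mathcomp Require Import all_classical all_reals all_analysis.
From mathcomp Require Import ring lra.
Import Order.TTheory GRing.Theory Num.Theory.
Import numFieldNormedType.Exports.
Local Open Scope classical_set_scope.
Local Open Scope ring_scope.

(* For each t, zeta t lies within r/2 of y t: when y t is off Z (w t), the point
   given by r-prox-regularity satisfies the variational inequality, so by
   uniqueness it is zeta t, and it realises dist (y t) (Z (w t)) <= r/2.
   Adding the variational inequalities at s and t, tested at points of
   Z (w s) and Z (w t) that are Hausdorff-close to zeta t and zeta s, gives
   |zeta s - zeta t|^2 <= 16 |y s - y t|^2 + C h whenever the Hausdorff
   distance is below h. Thus zeta is uniformly controlled by the pair (y, w),
   and one-sided limits pass from y and w to zeta (left limits through the
   Cauchy criterion in the complete space X). *)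

Section Distance.
Context {R : realType} {X : normedModType R}.
Implicit Types (x z zh : X) (Z Zh : set X).

Lemma dist_le_norm x {Z z} : Z z -> dist x Z <= `|x - z|.
Proof.
move=> Zz; apply: ge_inf; last by exists z.
by exists 0 => _ [u _ <-].
Qed.

Lemma dist_ge0 x Z : 0 <= dist x Z.
Proof.
have [[z Zz]|Z0] := pselect (Z !=set0).
  apply: lb_le_inf; first by exists `|x - z|, z.
  by move=> _ [u _ <-].
have -> : Z = set0 by apply/seteqP; split => // u Zu; apply: Z0; exists u.
by rewrite /dist image_set0 inf0.
Qed.

Lemma dist_lt_witness {x Z e} : Z !=set0 -> dist x Z < e ->
  exists2 z, Z z & `|x - z| < e.
Proof.
move=> [z Zz] /inf_lt; case; first by exists `|x - z|, z.
by move=> _ [u Zu <-] lt_ue; exists u.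
Qed.

Lemma closed_dist_eq0 {x Z} : closed Z -> Z !=set0 -> dist x Z = 0 -> Z x.
Proof.
move=> Zcl Zn0 dx0; apply: Zcl => B /nbhs_normP [e e0 sB].
have [z Zz xz] : exists2 z, Z z & `|x - z| < e by apply: dist_lt_witness; rewrite ?dx0.
by exists z; split => //; apply: sB.
Qed.

Lemma dH_lt_witness {Z Zh zh e} : Z !=set0 -> Zh zh -> (dH Z Zh < e%:E)%E ->
  exists2 z, Z z & `|zh - z| < e.
Proof.
move=> Zn0 Zhzh dH_lt; apply: dist_lt_witness => //.
rewrite -lte_fin; apply: le_lt_trans dH_lt.
by rewrite le_max; apply/orP; right; apply: ereal_sup_ubound; exists zh.
Qed.

End Distance.

Section InnerProduct.
Context {R : realType} {X : normedModType R} {ip : X -> X -> R}.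
Hypothesis Hip : inner_product ip.
Implicit Types x y z : X.

Lemma ipC x y : ip x y = ip y x.
Proof. by case: Hip. Qed.

Lemma ipxx x : ip x x = `|x| ^+ 2.
Proof. by case: Hip. Qed.

Lemma ip0l z : ip 0 z = 0.
Proof.
case: Hip => _ ip_lin _; have := ip_lin 1 0 0 z.
rewrite scaler0 addr0 mul1r => /(congr1 (fun u => u - ip 0 z)).
by rewrite subrr addrK.
Qed.

Lemma ipDl x y z : ip (x + y) z = ip x z + ip y z.
Proof. by case: Hip => _ ip_lin _; rewrite -[x in LHS]scale1r ip_lin mul1r. Qed.

Lemma ipZl a x z : ip (a *: x) z = a * ip x z.
Proof. by case: Hip => _ ip_lin _; rewrite -[_ *: x]addr0 ip_lin ip0l addr0. Qed.

Lemma ipNl x z : ip (- x) z = - ip x z.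
Proof. by rewrite -scaleN1r ipZl mulN1r. Qed.

Lemma ipDr x y z : ip z (x + y) = ip z x + ip z y.
Proof. by rewrite ipC ipDl !(ipC z). Qed.

Lemma ipNr x z : ip z (- x) = - ip z x.
Proof. by rewrite ipC ipNl ipC. Qed.

Lemma ipZr a x z : ip z (a *: x) = a * ip z x.
Proof. by rewrite ipC ipZl ipC. Qed.

Lemma normD2 x y : `|x + y| ^+ 2 = `|x| ^+ 2 + 2 * ip x y + `|y| ^+ 2.
Proof. by rewrite -!ipxx ipDl !ipDr (ipC y x); ring. Qed.

Lemma normB2 x y : `|x - y| ^+ 2 = `|x| ^+ 2 - 2 * ip x y + `|y| ^+ 2.
Proof. by rewrite normD2 ipNr normrN; ring. Qed.

Lemma young_ip a x y : 0 < a -> 2 * ip x y <= a * `|x| ^+ 2 + a^-1 * `|y| ^+ 2.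
Proof.
move=> a0; rewrite -(ler_pM2l a0) mulrDr !mulrA divff ?gt_eqF // mul1r.
have := sqr_ge0 `|a *: x - y|.
by rewrite normB2 ipZl normrZ exprMn gtr0_norm //; nra.
Qed.

End InnerProduct.

Definition prox_ineq {R : realType} {X : normedModType R} (ip : X -> X -> R)
    (r : R) (y v z : X) :=
  0 <= ip (y - v) (v - z) + `|y - v| / (2 * r) * `|v - z| ^+ 2.

Definition is_prox_proj {R : realType} {X : normedModType R} (ip : X -> X -> R)
    (r : R) (Z : set X) (y v : X) :=
  Z v /\ forall z, Z z -> prox_ineq ip r y v z.

Section ProxProjection.
Context {R : realType} {X : normedModType R} {ip : X -> X -> R}.
Hypothesis Hip : inner_product ip.
Context {r : R}.
Hypothesis r_gt0 : 0 < r.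
Implicit Types (y v z : X) (Z : set X).

Lemma prox_regular_proj_exists {Z y} : prox_regular r Z -> 0 < dist y Z < r ->
  exists2 x, is_prox_proj ip r Z y x & `|y - x| = dist y Z.
Proof.
case=> _ _ Zpr dyZ; have [x Zx [far_x scaled_yx]] := Zpr y dyZ.
move: dyZ far_x scaled_yx; set d := dist y Z => /andP[d_gt0 _] far_x scaled_yx.
clearbody d.
have [d_neq0 r_neq0] : d != 0 /\ r != 0 by rewrite !gt_eqF.
have yx : `|y - x| = d.
  apply: (@mulfI _ (r / d)); first by rewrite mulf_neq0 ?invr_eq0.
  by rewrite scaled_yx; field.
exists x => //; split=> // z Zz.
(* Z avoids the open ball of radius r around x + (r/d)(y - x); expanding
   r^2 <= |x - z + (r/d)(y - x)|^2 is the inequality scaled by 2r/d. *)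
have far_z := dist_le_norm (x + (r / d) *: (y - x)) Zz.
rewrite far_x addrAC in far_z.
have : r ^+ 2 <= `|(x - z) + (r / d) *: (y - x)| ^+ 2.
  by rewrite !expr2; apply: ler_pM => //; exact: ltW.
have rd_ge0 : 0 <= r / d by apply: divr_ge0; apply: ltW.
rewrite (normD2 Hip) (ipZr Hip) normrZ (ger0_norm rd_ge0) yx (ipC Hip).
have -> : (r / d * d) ^+ 2 = r ^+ 2 by field.
rewrite lerDr => key; rewrite /prox_ineq yx.
have -> : ip (y - x) (x - z) + d / (2 * r) * `|x - z| ^+ 2 =
    d / (2 * r) * (`|x - z| ^+ 2 + 2 * (r / d * ip (y - x) (x - z))).
  by field; rewrite d_neq0 r_neq0.
by rewrite mulr_ge0 // divr_ge0 ?mulr_ge0 // ltW.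
Qed.

Lemma is_prox_proj_self {Z y} : Z y -> is_prox_proj ip r Z y y.
Proof.
by move=> Zy; split=> // z _; rewrite /prox_ineq subrr normr0 ip0l // !mul0r addr0.
Qed.

Lemma prox_proj_near {Z y c} : prox_regular r Z -> dist y Z <= r / 2 ->
  is_prox_proj ip r Z y c -> (forall v, is_prox_proj ip r Z y v -> v = c) ->
  `|y - c| <= r / 2.
Proof.
move=> Zpr dyZ [Zc _] proj_uniq.
have [d_gt0|d_eq0] : 0 < dist y Z \/ dist y Z = 0.
  by move: (dist_ge0 y Z); rewrite le_eqVlt => /orP[/eqP->|]; [right|left].
- have [|x /proj_uniq <- ->] // := prox_regular_proj_exists (y := y) Zpr.
  by rewrite d_gt0 (le_lt_trans dyZ) //; lra.
- case: Zpr => Zcl _ _.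
  rewrite -(proj_uniq y) ?subrr ?normr0; first lra.
  by apply: is_prox_proj_self; apply: closed_dist_eq0 => //; exists c.
Qed.

Lemma prox_ineq_weaken {y c z} : `|y - c| <= r / 2 -> prox_ineq ip r y c z ->
  0 <= ip (y - c) (c - z) + `|c - z| ^+ 2 / 4.
Proof.
move=> yc_le; rewrite /prox_ineq => ineq; apply: (le_trans ineq); rewrite lerD2l.
rewrite mulrC ler_wpM2l ?sqr_ge0 // ler_pdivrMr ?mulr_gt0 //; lra.
Qed.

Lemma prox_ineq_stable {h : R} {y1 y2 c1 c2 z1 z2} : 0 < h <= 1 ->
  `|y1 - c1| <= r / 2 -> `|y2 - c2| <= r / 2 ->
  prox_ineq ip r y1 c1 z1 -> prox_ineq ip r y2 c2 z2 ->
  `|c2 - z1| < h -> `|c1 - z2| < h ->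
  `|c1 - c2| ^+ 2 <= 16 * `|y1 - y2| ^+ 2 + (2 * r ^+ 2 + 20) * h.
Proof.
move=> /andP[h_gt0 h_le1] a1_le a2_le /(prox_ineq_weaken a1_le) ineq1.
move=> /(prox_ineq_weaken a2_le) ineq2 e1_lt e2_lt.
have cross : ip (y1 - c1) (c1 - c2) - ip (y2 - c2) (c1 - c2) =
    ip (y1 - y2) (c1 - c2) - `|c1 - c2| ^+ 2.
  have -> : y1 - y2 = (y1 - c1) - (y2 - c2) + (c1 - c2).
    by rewrite [RHS]addrAC subrKA opprB subrKA.
  by rewrite -(ipxx Hip) !(ipDl Hip, ipNl Hip); ring.
have split1 : c1 - z1 = (c1 - c2) + (c2 - z1) by rewrite addrA subrK.
have split2 : c2 - z2 = (c1 - z2) - (c1 - c2).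
  by rewrite opprB [RHS]addrC addrA subrK.
rewrite split1 in ineq1; rewrite split2 in ineq2.
move: ineq1 ineq2 cross a1_le a2_le e1_lt e2_lt.
move: (c1 - c2) (c2 - z1) (c1 - z2) (y1 - c1) (y2 - c2) (y1 - y2).
move=> D e1 e2 a1 a2 u ineq1 ineq2 cross a1_le a2_le e1_lt e2_lt.
(* Summing ineq1 and ineq2, cross turns the D-terms into <u, D> - |D|^2;
   Young's inequality absorbs what is left of D and bounds the rest by h. *)
rewrite (normD2 Hip) (ipDr Hip) in ineq1.
rewrite (normB2 Hip) (ipDr Hip) (ipNr Hip) in ineq2.
have young_De1 := young_ip Hip (2^-1) D e1 ltac:(lra).
have young_De2 := young_ip Hip 2 e2 (- D) ltac:(lra).
have young_Du := young_ip Hip (4^-1) D u ltac:(lra).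
have young_ae1 := young_ip Hip h a1 e1 h_gt0.
have young_ae2 := young_ip Hip h a2 e2 h_gt0.
rewrite invrK in young_De1 young_Du.
rewrite (ipNr Hip) normrN in young_De2.
rewrite (ipC Hip D u) in young_Du.
have small_e (e : X) : `|e| < h -> `|e| ^+ 2 <= h /\ h^-1 * `|e| ^+ 2 <= h.
  move=> e_lt; have e_ge0 := normr_ge0 e.
  have e2_le : `|e| ^+ 2 <= h ^+ 2 by rewrite !expr2 ler_pM // ltW.
  by split; [nra | rewrite ler_pdivrMl //; nra].
have small_a (a : X) : `|a| <= r / 2 -> h * `|a| ^+ 2 <= h * (r ^+ 2 / 4).
  move=> a_le; rewrite ler_pM2l //; have := normr_ge0 a; nra.
have [e1_sq e1_inv] := small_e _ e1_lt; have [e2_sq e2_inv] := small_e _ e2_lt.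
have := small_a _ a1_le; have := small_a _ a2_le.
lra.
Qed.

End ProxProjection.

Definition uniformly_controlled {R : realType} {E F G : normedModType R} (T : R)
    (f : R -> E) (g : R -> F) (phi : R -> G) :=
  forall eps : R, 0 < eps -> exists2 eta : R, 0 < eta & exists2 delta : R, 0 < delta &
    forall s t : R, 0 <= s <= T -> 0 <= t <= T ->
      `|f s - f t| < eta -> `|g s - g t| < delta -> `|phi s - phi t| < eps.

Section Controlled.
Context {R : realType} {E F : normedModType R} {G : completeNormedModType R}.
Context {T : R} {f : R -> E} {g : R -> F} {phi : R -> G}.
Hypothesis phi_ctrl : uniformly_controlled T f g phi.

Lemma controlled_cvg_left (t : R) : 0 < t <= T ->
  cvg (f @ t^'-) -> cvg (g @ t^'-) -> cvg (phi @ t^'-).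
Proof.
move=> /andP[t_gt0 t_leT] /cvgrPdist_lt f_cvg /cvgrPdist_lt g_cvg.
apply: cauchy_cvg; apply: cauchy_exP => eps eps_gt0.
have [eta eta_gt0 [delta delta_gt0 ctrl]] := phi_ctrl _ eps_gt0.
set lf := lim (f @ t^'-) in f_cvg; set lg := lim (g @ t^'-) in g_cvg.
have near_t : \forall s \near t^'-, [/\ 0 < s, s < t,
    `|lf - f s| < eta / 2 & `|lg - g s| < delta / 2].
  near=> s; split.
  - by near: s; exact: nbhs_left_gt.
  - by near: s; exact: nbhs_left_lt.
  - by near: s; apply: f_cvg; lra.
  - by near: s; apply: g_cvg; lra.
have [s0 [s0_gt0 s0_lt fs0 gs0]] := filter_ex near_t.
exists (phi s0); apply: filterS near_t => s [s_gt0 s_lt fs gs].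
rewrite -ball_normE /=; apply: ctrl.
- by rewrite ltW //= (le_trans (ltW s0_lt)).
- by rewrite ltW //= (le_trans (ltW s_lt)).
- by apply: le_lt_trans (ler_distD lf _ _) _; rewrite distrC; lra.
- by apply: le_lt_trans (ler_distD lg _ _) _; rewrite distrC; lra.
Unshelve. all: by end_near.
Qed.

Lemma controlled_cvg_right (t : R) : 0 <= t < T ->
  f @ t^'+ --> f t -> g @ t^'+ --> g t -> phi @ t^'+ --> phi t.
Proof.
move=> /andP[t_ge0 t_ltT] /cvgrPdist_lt f_cvg /cvgrPdist_lt g_cvg.
apply/cvgrPdist_lt => eps eps_gt0.
have [eta eta_gt0 [delta delta_gt0 ctrl]] := phi_ctrl _ eps_gt0.
near=> s.
have t_lt_s : t < s by near: s; exact: nbhs_right_gt.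
have s_ltT : s < T by near: s; exact: nbhs_right_lt.
apply: ctrl.
- by rewrite t_ge0 ltW.
- by rewrite (ltW s_ltT) (le_trans t_ge0 (ltW t_lt_s)).
- by near: s; apply: f_cvg.
- by near: s; apply: g_cvg.
Unshelve. all: by end_near.
Qed.

Lemma regulated_rc_controlled :
  regulated_rc T f -> regulated_rc T g -> regulated_rc T phi.
Proof.
move=> [f_left f_right] [g_left g_right]; split=> t t_in.
- exact: controlled_cvg_left (f_left t t_in) (g_left t t_in).
- exact: controlled_cvg_right (f_right t t_in) (g_right t t_in).
Qed.

End Controlled.

Definition dH_uniformly_continuous {R : realType} {X W : normedModType R}
    (A : set W) (Z : W -> set X) :=
  forall eps : R, 0 < eps -> exists2 delta : R, 0 < delta &
    forall w wh, A w -> A wh -> `|w - wh| < delta -> (dH (Z w) (Z wh) < eps%:E)%E.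

Section ProxProjectionPath.
Context {R : realType} {X W : normedModType R} {ip : X -> X -> R}.
Hypothesis Hip : inner_product ip.
Context {A : set W} {Z : W -> set X} {r T : R}.
Context {y : R -> X} {w : R -> W} {zeta : R -> X}.
Hypotheses (r_gt0 : 0 < r) (Z_ucont : dH_uniformly_continuous A Z).
Hypothesis wA : forall t : R, 0 <= t <= T -> A (w t).
Hypothesis zeta_proj : forall t : R, 0 <= t <= T -> is_prox_proj ip r (Z (w t)) (y t) (zeta t).
Hypothesis zeta_near : forall t : R, 0 <= t <= T -> `|y t - zeta t| <= r / 2.

Lemma prox_proj_controlled : uniformly_controlled T y w zeta.
Proof.
move=> eps eps_gt0; pose K := 2 * r ^+ 2 + 20.
have K_gt0 : 0 < K by rewrite /K; have := sqr_ge0 r; lra.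
pose h := Order.min 1 (eps ^+ 2 / (2 * K)).
have h_gt0 : 0 < h by rewrite lt_min ltr01 divr_gt0 ?exprn_gt0 ?mulr_gt0.
have h_le1 : h <= 1 by rewrite ge_min lexx.
have Kh_le : K * h <= eps ^+ 2 / 2.
  have -> : eps ^+ 2 / 2 = K * (eps ^+ 2 / (2 * K)) by field; rewrite gt_eqF.
  by apply: ler_wpM2l; [exact: ltW | rewrite /h ge_min lexx orbT].
have [delta delta_gt0 dH_lt] := Z_ucont _ h_gt0.
exists (eps / 6); first lra.
exists delta => // s t s_in t_in ys_yt ws_wt.
have [proj_s proj_t] := (zeta_proj _ s_in, zeta_proj _ t_in).
have [z1 Zz1 z1_near] := dH_lt_witness (ex_intro _ _ proj_s.1) proj_t.1
  (dH_lt _ _ (wA _ s_in) (wA _ t_in) ws_wt).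
rewrite distrC in ws_wt.
have [z2 Zz2 z2_near] := dH_lt_witness (ex_intro _ _ proj_t.1) proj_s.1
  (dH_lt _ _ (wA _ t_in) (wA _ s_in) ws_wt).
have h_in : 0 < h <= 1 by rewrite h_gt0 h_le1.
have bound := prox_ineq_stable Hip r_gt0 h_in (zeta_near _ s_in)
  (zeta_near _ t_in) (proj_s.2 _ Zz1) (proj_t.2 _ Zz2) z1_near z2_near.
rewrite -/K in bound.
have y_ge0 := normr_ge0 (y s - y t); have zeta_ge0 := normr_ge0 (zeta s - zeta t).
by rewrite ltNge; apply/negP => eps_le; nra.
Qed.

End ProxProjectionPath.

Theorem corollary4p4 (R : realType)
  (X : completeNormedModType R) (ip : X -> X -> R) (Hip : inner_product ip)
  (W : completeNormedModType R) (A : set W) (HA : closed A)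
  (r T : R) (Hr : 0 < r) (HT : 0 < T)
  (Z : W -> set X) (HZ : forall w, A w -> prox_regular r (Z w))
  (HZc : forall eps : R, 0 < eps -> exists2 delta : R, 0 < delta &
     forall w wh, A w -> A wh -> `|w - wh| < delta -> (dH (Z w) (Z wh) < eps%:E)%E)
  (y : R -> X) (w : R -> W) (Hy : regulated_rc T y) (Hw : regulated_rc T w)
  (HwA : forall t, 0 <= t <= T -> A (w t))
  (Hdist : forall t, 0 <= t <= T -> dist (y t) (Z (w t)) <= r / 2)
  (zeta : R -> X)
  (Hzeta : forall t, 0 <= t <= T ->
     Z (w t) (zeta t) /\
     (forall z, Z (w t) z ->
        0 <= ip (y t - zeta t) (zeta t - z)
             + `|y t - zeta t| / (2 * r) * `|zeta t - z| ^+ 2))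
  (Hzeta_uniq : forall t, 0 <= t <= T -> forall v, Z (w t) v ->
     (forall z, Z (w t) z ->
        0 <= ip (y t - v) (v - z) + `|y t - v| / (2 * r) * `|v - z| ^+ 2) ->
     v = zeta t) :
  regulated_rc T zeta.
Proof.
have zeta_near t : 0 <= t <= T -> `|y t - zeta t| <= r / 2.
  move=> t_in; apply: (prox_proj_near Hip Hr (HZ _ (HwA t t_in)) (Hdist t t_in)).
  - exact: Hzeta.
  - by move=> v [Zv v_proj]; apply: Hzeta_uniq.
have zeta_ctrl := prox_proj_controlled Hip Hr HZc HwA Hzeta zeta_near.
exact: (regulated_rc_controlled zeta_ctrl Hy Hw).
Qed.
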